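(* Let $\mathbf{k}$ be an algebraically closed field of prime characteristic $p$ and let $R(p)$ be the Radford algebra over $\mathbf{k}$. Then the spaces of left and right integrals in $R(p)$ are \[ \int^l_{R(p)}=\mathbf{k}\Big(\sum_{0\le i\le p-1}g^i\Big)\Big(\sum_{1\le i\le p-1}(-1)^ix^i\Big),\qquad \int^r_{R(p)}=\mathbf{k}\Big(\sum_{1\le i\le p-1}x^i\Big)\Big(\sum_{0\le i\le p-1}g^i\Big), \] and the spaces of left and right integrals in the dual Hopf algebra $R(p)^*$ are \[ \int^l_{R(p)^*}=\mathbf{k}\,\delta_{gx^{p-1}},\qquad \int^r_{R(p)^*}=\mathbf{k}\,\delta_{x^{p-1}}. \]
   Context: The Radford algebra $R(p)$ is the Hopf algebra over $\mathbf{k}$ generated as an algebra by $g,x$ subject to the relations $g^p=1$, $x^p=x$, $gx-xg=g^2-g$ if $p>2$, and $g^2=1$, $x^2=x$, $gx-xg=1-g$ if $p=2$; its coalgebra structure is given by $\Delta(g)=g\otimes g$, $\Delta(x)=x\otimes 1+g\otimes x$, $\varepsilon(g)=1$, $\varepsilon(x)=0$. It has basis $\{g^ix^j: 0\le i,j\le p-1\}$, and $\{\delta_{g^ix^j}: 0\le i,j\le p-1\}$ denotes the dual basis of $R(p)^*$, i.e. $\delta_{g^ix^j}(g^mx^n)=1$ if $(m,n)=(i,j)$ and $0$ otherwise. The dual Hopf algebra $H^*$ of a finite-dimensional Hopf algebra $H$ has product $(fg)(h)=\sum f(h_{(1)})g(h_{(2)})$ and counit $f\mapsto f(1)$. A left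 (resp. right) integral in a Hopf algebra $H$ is an element $\Lambda\in H$ with $h\Lambda=\varepsilon(h)\Lambda$ (resp. $\Lambda h=\varepsilon(h)\Lambda$) for all $h\in H$; $\int^l_H$ and $\int^r_H$ denote the spaces of left and right integrals. *)

From HB Require Import structures.
From mathcomp Require Import all_boot all_order all_algebra.
Set Implicit Arguments. Unset Strict Implicit. Unset Printing Implicit Defensive.
Import Order.TTheory GRing.Theory.
Local Open Scope ring_scope.

Section Radford.
Variables (k : fieldType) (A : algType k).

(* Defining relations of the Radford algebra R(p).  For p = 2 the paper's
   relations g^2=1, x^2=x, gx-xg=1-g coincide with these (g^2 - g = 1 - g). *)
Definition radford_rels (p : nat) (g x : A) : Prop :=
  [/\ g ^+ p = 1, x ^+ p = x & g * x - x * g = g ^+ 2 - g].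

Definition radford_basis (p : nat) (g x : A) : Prop :=
  (forall a : A, exists c : 'I_p -> 'I_p -> k,
      a = \sum_(i < p) \sum_(j < p) c i j *: (g ^+ i * x ^+ j)) /\
  (forall c : 'I_p -> 'I_p -> k,
      \sum_(i < p) \sum_(j < p) c i j *: (g ^+ i * x ^+ j) = 0 ->
      forall i j, c i j = 0).

Definition klinear (f : A -> k) : Prop :=
  forall (c : k) (a b : A), f (c *: a + b) = c * f a + f b.

Definition is_counit (g x : A) (eps : A -> k) : Prop :=
  [/\ klinear eps, (forall a b, eps (a * b) = eps a * eps b), eps 1 = 1,
      eps g = 1 & eps x = 0].

Definition left_integral (eps : A -> k) (L : A) : Prop :=
  forall h : A, h * L = eps h *: L.
Definition right_integral (eps : A -> k) (L : A) : Prop :=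
  forall h : A, L * h = eps h *: L.

(* Coproduct on basis elements, as a formal sum of pure tensors:
   Delta(g^m x^n) = (g (x) g)^m (x (x) 1 + g (x) x)^n
                  = sum_{w in {0,1}^n} g^m a_w (x) g^m b_w,
   where a_w (resp. b_w) is the ordered product of the first (resp. second)
   tensor factors of the chosen summands (true = g (x) x, false = x (x) 1). *)
Definition Dleft (g x : A) (w : seq bool) : A :=
  \prod_(b <- w) (if b then g else x).
Definition Dright (x : A) (w : seq bool) : A :=
  \prod_(b <- w) (if b then x else 1).

(* (f * phi)(g^m x^n) = sum f(h_(1)) phi(h_(2)) : convolution product of A^*,
   evaluated on the basis element g^m x^n. *)
Definition conv_on_basis (g x : A) (f phi : A -> k) (m n : nat) : k :=
  \sum_(w : n.-tuple bool)
     f (g ^+ m * Dleft g x w) * phi (g ^+ m * Dright x w).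

(* lam in A^* is a left (resp. right) integral of A^*: f lam = f(1) lam
   (resp. lam f = f(1) lam) for all f in A^*; two linear functionals are equal
   iff they agree on the basis {g^m x^n}. *)
Definition dual_left_integral (p : nat) (g x : A) (lam : A -> k) : Prop :=
  forall f : A -> k, klinear f ->
    forall m n : 'I_p, conv_on_basis g x f lam m n = f 1 * lam (g ^+ m * x ^+ n).
Definition dual_right_integral (p : nat) (g x : A) (lam : A -> k) : Prop :=
  forall f : A -> k, klinear f ->
    forall m n : 'I_p, conv_on_basis g x lam f m n = f 1 * lam (g ^+ m * x ^+ n).

End Radford.

From HB Require Import structures.
From mathcomp Require Import all_boot all_order all_algebra.
From Stdlib Require Import ClassicalEpsilon.
Set Implicit Arguments. Unset Strict Implicit. Unset Printing Implicit Defensive.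
Import Order.TTheory GRing.Theory.
Local Open Scope ring_scope.

(* Work in coordinates for the basis g^i x^j.  Summing x g^i = g^i x + i (g^i - g^(i+1))
   over i < p and using p = 0 in k gives x S = S (x + 1) for S the sum of the powers of g.
   Hence S U, with U = sum_(i>=1) (-x)^i, is fixed by g and killed by x, because
   (x + 1) U = x^p - x = 0.  Conversely a g-fixed L has the form S V, and x L = 0 forces
   (x + 1) V = 0, whose solutions are the multiples of U; right integrals are treated the
   same way, from S x = (x - 1) S.  For the dual, a word in g and x equals its normal-ordered
   form g^a x^b modulo smaller x-degree, so evaluating the convolution identity on coordinate
   functionals gives triangular equations with binomial coefficients 'C(n, 1) = n, invertible
   for 0 < n < p; they kill every value of an integral but one. *)

Lemma big_tuple_cons (V : nmodType) n (F : n.+1.-tuple bool -> V) :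
  \sum_(w : n.+1.-tuple bool) F w =
  \sum_(w : n.-tuple bool) (F (cons_tuple true w) + F (cons_tuple false w)).
Proof.
rewrite (reindex (fun bw : bool * n.-tuple bool => cons_tuple bw.1 bw.2)) /=.
  rewrite -(pair_big xpredT xpredT (fun b w => F (cons_tuple b w))) /=.
  by rewrite big_bool big_split.
exists (fun t => (thead t, [tuple of behead t])) => [[b w] _|t _] /=.
  by congr (_, _); apply: val_inj.
by case/tupleP: t => b w; apply: val_inj.
Qed.

Lemma sum_count_tuple_eq n t :
  (\sum_(w : n.-tuple bool) (count id w == t))%N = 'C(n, t).
Proof.
elim: n t => [|n IHn] t.
  rewrite (eq_bigr (fun _ => (0 == t) : nat)) => [|w _]; last by rewrite (tuple0 w).
  by rewrite sum_nat_const card_tuple; case: t.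
rewrite (big_tuple_cons (fun w : n.+1.-tuple bool => (count id w == t) : nat)) /=.
rewrite big_split /= IHn; case: t => [|t]; first by rewrite bin0 big1.
by rewrite binS addnC; congr (_ + _); rewrite -IHn; apply: eq_bigr.
Qed.

Lemma sum_count_tuple (R : pzSemiRingType) n t c (F : n.-tuple bool -> R) :
  (forall w, F w = if count id w == t then c else 0) ->
  \sum_(w : n.-tuple bool) F w = 'C(n, t)%:R * c.
Proof.
move=> Fw; rewrite (eq_bigr (fun w : n.-tuple bool => (count id w == t)%:R * c)).
  by rewrite -mulr_suml -natr_sum sum_count_tuple_eq.
by move=> w _; rewrite Fw; case: eqP; rewrite ?mul1r ?mul0r.
Qed.

Lemma count_negb (s : seq bool) : count negb s = (size s - count id s)%N.
Proof. by rewrite -(count_predC id s) addKn. Qed.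

Lemma sum_ord_natr_eq (R : pzSemiRingType) n (F : nat -> R) j : (j < n)%N ->
  \sum_(b < n) F b * (b == j :> nat)%:R = F j.
Proof.
move=> ltjn; rewrite (eq_bigr (fun b : 'I_n => if b == j :> nat then F b else 0)).
  by rewrite -big_mkcond big_ord1_eq ltjn.
by move=> b _; rewrite mulr_natr mulrb.
Qed.

Lemma sum_ord2_natr_eq (R : pzSemiRingType) n (F : nat -> nat -> R) (Q : pred nat) i :
  (i < n)%N ->
  \sum_(a < n) \sum_(b < n) F a b * ((a == i :> nat) && Q b)%:R =
  \sum_(b < n) F i b * (Q b)%:R.
Proof.
move=> ltin; rewrite -(sum_ord_natr_eq (fun a => \sum_(b < n) F a b * (Q b)%:R) ltin).
apply: eq_bigr => a _; rewrite mulr_suml; apply: eq_bigr => b _.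
by case: eqP => _; rewrite ?mulr1 ?mulr0.
Qed.

Lemma sum_nat1 (V : zmodType) n (F : nat -> V) : (0 < n)%N ->
  \sum_(1 <= i < n) F i = \sum_(i < n) F i - F 0%N.
Proof. by move=> n_gt0; rewrite -(big_mkord xpredT) (big_ltn n_gt0) addrC addKr. Qed.

Lemma signr_pred_pchar (R : nzRingType) p : prime p -> p \in [pchar R] ->
  (-1) ^+ p.-1 = 1 :> R.
Proof.
move=> p_prime p_char; case: (even_prime p_prime) => [p2|odd_p].
  by rewrite p2 expr1 oppr_pchar2 // -p2.
by rewrite -signr_odd -subn1 oddB ?prime_gt0 // odd_p.
Qed.

Lemma addr1_mul_sum_signr (K : pzRingType) (B : algType K) (y : B) n :
  (y + 1) * \sum_(1 <= i < n.+1) (-1) ^+ i *: y ^+ i = (-1) ^+ n *: y ^+ n.+1 - y.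
Proof.
elim: n => [|n IHn]; first by rewrite big_geq // mulr0 expr0 scale1r expr1 subrr.
rewrite big_nat_recr //= mulrDr IHn mulrDl mul1r -scalerAr -exprS.
have -> : (-1) ^+ n.+1 *: y ^+ n.+1 = - ((-1) ^+ n *: y ^+ n.+1).
  by rewrite exprS mulN1r scaleNr.
by rewrite addrC -addrA addKr.
Qed.

Lemma sum_exp_mulrB1 (R : pzRingType) (y : R) n :
  \sum_(1 <= i < n.+1) y ^+ i * (y - 1) = y ^+ n.+1 - y.
Proof.
elim: n => [|n IHn]; first by rewrite big_geq // expr1 subrr.
rewrite big_nat_recr //= IHn mulrBr mulr1 -exprSr.
by rewrite addrC addrA addrC subrK addrC.
Qed.

Lemma sign_alternating_rec (R : pzRingType) (d : nat -> R) n :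
  (forall b, (0 < b)%N -> (b.+1 < n)%N -> d b.+1 = - d b) ->
  forall b, (0 < b < n)%N -> d b = - d 1%N * (-1) ^+ b.
Proof.
move=> dS; elim=> [//|[|b] IHb] /andP[_ lt_bn]; first by rewrite expr1 mulrN mulr1 opprK.
by rewrite dS // IHb ?(ltnW lt_bn) // !exprS !mulN1r !mulrN !opprK.
Qed.

Lemma sum_exp_mulrn_telescope (R : pzRingType) (y : R) n :
  \sum_(i < n) (y ^+ i - y ^+ i.+1) *+ i + y ^+ n *+ n = \sum_(i < n) y ^+ i.+1.
Proof.
elim: n => [|n IHn]; first by rewrite !big_ord0 mulr0n addr0.
rewrite !big_ord_recr /= -IHn mulrnBl mulrSr addrA; congr (_ + _).
by rewrite -addrA subrK.
Qed.

Section Commutation.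
Variables (k : fieldType) (A : algType k) (g x : A).
Hypothesis gxC : g * x - x * g = g ^+ 2 - g.

Lemma x_gexp i : x * g ^+ i = g ^+ i * x + (g ^+ i - g ^+ i.+1) *+ i.
Proof.
have xg : x * g = g * x + (g - g ^+ 2).
  by rewrite -[g - g ^+ 2]opprB -gxC opprB addrC subrK.
elim: i => [|i IHi]; first by rewrite expr0 mulr1 mul1r mulr0n addr0.
rewrite exprSr mulrA IHi mulrDl -mulrA xg mulrDr mulrA -exprSr mulrnAl.
by rewrite mulrBl -!exprSr mulrBr -exprSr -exprD addn2 mulrS !addrA.
Qed.

Lemma x_gexp_xexp i j : x * (g ^+ i * x ^+ j) =
  g ^+ i * x ^+ j.+1 + (g ^+ i * x ^+ j - g ^+ i.+1 * x ^+ j) *+ i.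
Proof. by rewrite mulrA x_gexp mulrDl -mulrA -exprS mulrnAl mulrBl. Qed.

Inductive xdeg_lt (d : nat) : A -> Prop :=
| xdeg_lt0 : xdeg_lt d 0
| xdeg_ltD a b : xdeg_lt d a -> xdeg_lt d b -> xdeg_lt d (a + b)
| xdeg_ltZ (c : k) a : xdeg_lt d a -> xdeg_lt d (c *: a)
| xdeg_lt_gexp_xexp i j : (j < d)%N -> xdeg_lt d (g ^+ i * x ^+ j).

Lemma xdeg_ltB d a b : xdeg_lt d a -> xdeg_lt d b -> xdeg_lt d (a - b).
Proof. by move=> da db; apply: xdeg_ltD => //; rewrite -scaleN1r; apply: xdeg_ltZ. Qed.

Lemma xdeg_ltMn d a n : xdeg_lt d a -> xdeg_lt d (a *+ n).
Proof. by move=> da; rewrite -scaler_nat; apply: xdeg_ltZ. Qed.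

Lemma xdeg_lt_leq d e a : (d <= e)%N -> xdeg_lt d a -> xdeg_lt e a.
Proof.
move=> le_de; elim=> [|||i j lt_jd]; try by constructor.
by apply: xdeg_lt_gexp_xexp; apply: leq_trans lt_jd le_de.
Qed.

Lemma xdeg_lt_gexpM d m a : xdeg_lt d a -> xdeg_lt d (g ^+ m * a).
Proof.
elim=> [|a1 b1 _ ? _ ?|c a1 _ ?|i j ?].
- by rewrite mulr0; constructor.
- by rewrite mulrDr; constructor.
- by rewrite -scalerAr; constructor.
- by rewrite mulrA -exprD; constructor.
Qed.

Lemma xdeg_lt_xM d a : xdeg_lt d a -> xdeg_lt d.+1 (x * a).
Proof.
elim=> [|a1 b1 _ ? _ ?|c a1 _ ?|i j lt_jd].
- by rewrite mulr0; constructor.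
- by rewrite mulrDr; constructor.
- by rewrite -scalerAr; constructor.
- rewrite x_gexp_xexp; apply: xdeg_ltD; first exact: xdeg_lt_gexp_xexp.
  by apply/xdeg_ltMn/xdeg_ltB; apply: xdeg_lt_gexp_xexp; apply: leqW.
Qed.

Lemma Dleft_cons b w : Dleft g x (b :: w) = (if b then g else x) * Dleft g x w.
Proof. by rewrite /Dleft big_cons. Qed.

Lemma Dleft_xdeg_lt w :
  xdeg_lt (count negb w) (Dleft g x w - g ^+ count id w * x ^+ count negb w).
Proof.
elim: w => [|[] w IHw]; first by rewrite /Dleft big_nil expr0 mul1r subrr; constructor.
  by rewrite Dleft_cons /= add0n exprS -mulrA -mulrBr; exact: (xdeg_lt_gexpM 1 IHw).
set gx := g ^+ count id w * x ^+ count negb w.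
rewrite Dleft_cons /= add0n add1n.
have -> : x * Dleft g x w - g ^+ count id w * x ^+ (count negb w).+1 =
    x * (Dleft g x w - gx) + (x * gx - g ^+ count id w * x ^+ (count negb w).+1).
  by rewrite mulrBr addrA subrK.
apply: xdeg_ltD; first exact: xdeg_lt_xM.
by rewrite x_gexp_xexp addrC addKr; apply/xdeg_ltMn/xdeg_ltB; apply: xdeg_lt_gexp_xexp.
Qed.

Lemma Dleft_nseq_false j w : Dleft g x (nseq j false ++ w) = x ^+ j * Dleft g x w.
Proof.
elim: j => [|j IHj]; first by rewrite expr0 mul1r.
by rewrite /= Dleft_cons IHj exprS mulrA.
Qed.

Lemma Dleft_allfalse w : count id w = 0%N -> Dleft g x w = x ^+ size w.
Proof.
elim: w => [|[] w IHw] //=; first by rewrite /Dleft big_nil.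
by move=> w0; rewrite Dleft_cons IHw // exprS.
Qed.

Lemma Dleft_alltrue w : count negb w = 0%N -> Dleft g x w = g ^+ size w.
Proof.
elim: w => [|[] w IHw] //=; first by rewrite /Dleft big_nil.
by move=> w0; rewrite Dleft_cons IHw // exprS.
Qed.

Lemma Dright_count w : Dright x w = x ^+ count id w.
Proof.
elim: w => [|b w IHw]; first by rewrite /Dright big_nil.
by rewrite /Dright big_cons -/(Dright x w) IHw; case: b; rewrite /= ?exprS ?mul1r.
Qed.

Lemma count_le_size n (w : n.-tuple bool) : (count id w <= n)%N.
Proof. by rewrite -{2}(size_tuple w) count_size. Qed.

Lemma conv_on_basis_count f lam m n t c :
  (forall w : n.-tuple bool,
     f (g ^+ m * Dleft g x w) * lam (g ^+ m * x ^+ count id w) =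
     if count id w == t then c else 0) ->
  conv_on_basis g x f lam m n = 'C(n, t)%:R * c.
Proof. by move=> Fw; apply: sum_count_tuple => w; rewrite Dright_count Fw. Qed.

Lemma xexp_gexp_xdeg_lt j i : xdeg_lt j (x ^+ j * g ^+ i - g ^+ i * x ^+ j).
Proof.
have := Dleft_xdeg_lt (nseq j false ++ nseq i true).
rewrite Dleft_nseq_false Dleft_alltrue ?count_nseq //=.
by rewrite !count_cat !count_nseq size_nseq /= !mul0n !mul1n add0n addn0.
Qed.

Section Functional.
Variables (f : A -> k) (f_lin : klinear f).
HB.instance Definition _ := GRing.isLinear.Build k A k *%R f f_lin.

Lemma xdeg_lt_kernel d a :
  (forall i j, (j < d)%N -> f (g ^+ i * x ^+ j) = 0) -> xdeg_lt d a -> f a = 0.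
Proof.
move=> f0; elim=> [|a1 b1 _ fa1 _ fb1|c a1 _ fa1|i j lt_jd].
- exact: linear0.
- by rewrite linearD /= fa1 fb1 addr0.
- by rewrite linearZ /= fa1 mulr0.
- exact: f0.
Qed.

Lemma gexpM_Dleft_kernel d m w : (count negb w <= d)%N ->
  (forall i j, (j < d)%N -> f (g ^+ i * x ^+ j) = 0) ->
  f (g ^+ m * Dleft g x w) = f (g ^+ (m + count id w) * x ^+ count negb w).
Proof.
move=> le_wd f0; rewrite -[Dleft g x w](subrK (g ^+ count id w * x ^+ count negb w)).
rewrite mulrDr linearD /= (xdeg_lt_kernel f0) ?add0r ?mulrA ?exprD //.
exact: xdeg_lt_gexpM (xdeg_lt_leq le_wd (Dleft_xdeg_lt w)).
Qed.

End Functional.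
End Commutation.

Section Radford.
Variables (k : fieldType) (p : nat) (A : algType k) (g x : A).
Hypotheses (p_prime : prime p) (p_char : p \in [pchar k])
  (rels : radford_rels p g x) (basis : radford_basis p g x).

Let p_gt0 : (0 < p)%N := prime_gt0 p_prime.
Let p_gt1 : (1 < p)%N := prime_gt1 p_prime.
Let predp_lt : (p.-1 < p)%N. Proof. by rewrite prednK. Qed.
Let leq_predp j : (j < p)%N -> (j <= p.-1)%N. Proof. by move=> lt_jp; rewrite -ltnS prednK. Qed.
Let predp_neq0 : (p.-1 == 0%N) = false. Proof. by rewrite -subn1 subn_eq0 leqNgt p_gt1. Qed.
Let gexp_p : g ^+ p = 1. Proof. by case: rels. Qed.
Let xexp_p : x ^+ p = x. Proof. by case: rels. Qed.
Let gxC : g * x - x * g = g ^+ 2 - g. Proof. by case: rels. Qed.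
Let gexp_mod i : g ^+ (i %% p) = g ^+ i. Proof. exact: expr_mod gexp_p. Qed.

Let modn_succ_eq a i : (a < p)%N -> (i.+1 < p)%N -> ((a.+1 %% p)%N == i.+1) = (a == i).
Proof.
move=> lt_ap lt_ip; case: (ltnP a.+1 p) => [|le_pa]; first by move/modn_small->.
have ap : a.+1 = p by apply/eqP; rewrite eqn_leq lt_ap le_pa.
by rewrite ap modnn; apply/esym/negbTE/eqP=> ai; move: lt_ip; rewrite -ai ap ltnn.
Qed.

Let modn_add_predp m : (m < p)%N -> ((m + p.-1) %% p == 0)%N = (m == 1%N).
Proof.
case: m => [|m] lt_mp; first by rewrite add0n modn_small // predp_neq0.
by rewrite addSn -addnS prednK // modnDr modn_small // ltnW.
Qed.

Lemma natr_lt_p_neq0 t : (0 < t < p)%N -> t%:R != 0 :> k.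
Proof. by case/andP=> t_gt0 t_lt; rewrite -(dvdn_pcharf p_char) gtnNdvd. Qed.

(* Indices out of range are read as 0. *)
Definition coord (i j : nat) (a : A) : k :=
  sval (constructive_indefinite_description _ (basis.1 a))
    (insubd (Ordinal p_gt0) i) (insubd (Ordinal p_gt0) j).

Lemma coordK a : a = \sum_(i < p) \sum_(j < p) coord i j a *: (g ^+ i * x ^+ j).
Proof.
rewrite /coord; case: constructive_indefinite_description => c /= {1}->.
by apply: eq_bigr => i _; apply: eq_bigr => j _; rewrite !valKd.
Qed.

Lemma coord_uniq (c : nat -> nat -> k) a :
  a = \sum_(i < p) \sum_(j < p) c i j *: (g ^+ i * x ^+ j) ->
  forall i j, (i < p)%N -> (j < p)%N -> coord i j a = c i j.
Proof.
move=> ac i j lt_ip lt_jp; apply/eqP; rewrite -subr_eq0; apply/eqP.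
have := basis.2 (fun i j : 'I_p => coord i j a - c i j) _ (Ordinal lt_ip) (Ordinal lt_jp).
apply; under eq_bigr => i' _ do rewrite (eq_bigr _ (fun j' _ => scalerBl _ _ _)) sumrB.
by rewrite sumrB -coordK -ac subrr.
Qed.

Lemma coord_linear i j : klinear (coord i j).
Proof.
pose i' := insubd (Ordinal p_gt0) i; pose j' := insubd (Ordinal p_gt0) j.
have coordE a : coord i j a = coord i' j' a by rewrite /coord !valKd.
move=> s a b; rewrite !coordE.
apply: (@coord_uniq (fun i j => s * coord i j a + coord i j b)) => //.
rewrite [in LHS](coordK a) [in LHS](coordK b) scaler_sumr -big_split.
apply: eq_bigr => m _; rewrite scaler_sumr -big_split; apply: eq_bigr => n _.
by rewrite scalerDl scalerA.
Qed.

HB.instance Definition _ i j := GRing.isLinear.Build k A k *%R (coord i j) (coord_linear i j).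

Lemma coord_inj u v :
  (forall i j, (i < p)%N -> (j < p)%N -> coord i j u = coord i j v) -> u = v.
Proof.
move=> uv; rewrite (coordK u) (coordK v); apply: eq_bigr => i _.
by apply: eq_bigr => j _; rewrite uv.
Qed.

Lemma coord_gx a b i j : (b < p)%N -> (i < p)%N -> (j < p)%N ->
  coord i j (g ^+ a * x ^+ b) = (((a %% p)%N == i) && (b == j))%:R.
Proof.
move=> lt_bp lt_ip lt_jp; rewrite -gexp_mod.
apply: (@coord_uniq (fun i j => (((a %% p)%N == i) && (b == j))%:R)) => //.
rewrite (bigD1 (Ordinal (ltn_pmod a p_gt0))) //= (bigD1 (Ordinal lt_bp)) //= !eqxx scale1r.
rewrite big1 ?addr0 => [|j' ne_j]; last first.
  by move: ne_j; rewrite -val_eqE /= eq_sym => /negbTE ->; rewrite scale0r.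
rewrite big1 ?addr0 // => i' ne_i; rewrite big1 // => j' _.
by move: ne_i; rewrite -val_eqE /= eq_sym => /negbTE ->; rewrite scale0r.
Qed.

Lemma coord_gx_lt a b i j : (b < j)%N -> (i < p)%N -> (j < p)%N ->
  coord i j (g ^+ a * x ^+ b) = 0.
Proof.
by move=> lt_bj lt_ip lt_jp; rewrite coord_gx ?(ltn_trans lt_bj) // (ltn_eqF lt_bj) andbF.
Qed.

Lemma coord_gexp a i j : (i < p)%N -> (j < p)%N ->
  coord i j (g ^+ a) = (((a %% p)%N == i) && (j == 0%N))%:R.
Proof. by move=> lt_ip lt_jp; rewrite -[g ^+ a]mulr1 -(expr0 x) coord_gx // (eq_sym 0%N). Qed.

Lemma coord1 i j : (i < p)%N -> (j < p)%N -> coord i j 1 = ((i == 0%N) && (j == 0%N))%:R.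
Proof. by move=> lt_ip lt_jp; rewrite -(expr0 g) coord_gexp // mod0n eq_sym. Qed.

Lemma coord_gx_le a m i j : (m <= p)%N -> (i < p)%N -> (j < p)%N ->
  coord i j (g ^+ a * x ^+ m) =
  (((a %% p)%N == i) && ((m == j) || (m == p) && (j == 1%N)))%:R.
Proof.
move=> le_mp lt_ip lt_jp; case: (ltnP m p) => [lt_mp|le_pm].
  by rewrite coord_gx // (ltn_eqF lt_mp) orbF.
have -> : m = p by apply/eqP; rewrite eqn_leq le_mp le_pm.
by rewrite xexp_p -[x]expr1 coord_gx // eqxx (gtn_eqF lt_jp) (eq_sym 1%N).
Qed.

Lemma coord_xdeg_lt d a i j : (d <= j)%N -> (i < p)%N -> (j < p)%N ->
  xdeg_lt g x d a -> coord i j a = 0.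
Proof.
move=> le_dj lt_ip lt_jp; apply: xdeg_lt_kernel; first exact: coord_linear.
move=> i' j' lt_j'd; rewrite coord_gx ?(leq_trans lt_j'd (leq_trans le_dj (ltnW lt_jp))) //.
by rewrite (ltn_eqF (leq_trans lt_j'd le_dj)) andbF.
Qed.

Lemma coord_gexpM_Dleft i b m w : (i < p)%N -> (b < p)%N -> (count negb w <= b)%N ->
  coord i b (g ^+ m * Dleft g x w) = coord i b (g ^+ (m + count id w) * x ^+ count negb w).
Proof.
move=> lt_ip lt_bp le_wb.
apply: (gexpM_Dleft_kernel gxC (coord_linear i b) (d := b)) => // a j lt_jb.
exact: coord_gx_lt.
Qed.

Lemma coord_gM z i j : (i.+1 < p)%N -> (j < p)%N -> coord i.+1 j (g * z) = coord i j z.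
Proof.
move=> lt_ip lt_jp; rewrite {1}(coordK z) mulr_sumr linear_sum /=.
rewrite -(sum_ord_natr_eq (fun b => coord i b z) lt_jp).
rewrite -(sum_ord2_natr_eq (fun a b => coord a b z) (pred1 j) (ltnW lt_ip)).
apply: eq_bigr => a _; rewrite mulr_sumr linear_sum; apply: eq_bigr => b _ /=.
by rewrite -scalerAr linearZ /= mulrA -exprS coord_gx // modn_succ_eq.
Qed.

Local Notation gsum := (\sum_(i < p) g ^+ i).
Local Notation xsum := (\sum_(1 <= i < p) x ^+ i).
Local Notation xsum_alt := (\sum_(1 <= i < p) (-1) ^+ i *: x ^+ i).
Local Notation Lambda_l := (gsum * xsum_alt).
Local Notation Lambda_r := (xsum * gsum).

Let sum_gexp_succ : \sum_(i < p) g ^+ i.+1 = gsum.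
Proof.
rewrite -(prednK p_gt0) big_ord_recr big_ord_recl /= prednK // gexp_p.
by rewrite expr0 addrC.
Qed.

Lemma gexpM_gsum m : g ^+ m * gsum = gsum.
Proof.
elim: m => [|m IHm]; first by rewrite mul1r.
by rewrite exprS -mulrA IHm mulr_sumr -[RHS]sum_gexp_succ; under eq_bigr do rewrite -exprS.
Qed.

Lemma gsumM_gexp m : gsum * g ^+ m = gsum.
Proof.
elim: m => [|m IHm]; first by rewrite mulr1.
by rewrite exprSr mulrA IHm mulr_suml -[RHS]sum_gexp_succ; under eq_bigr do rewrite -exprSr.
Qed.

Lemma x_gsum : x * gsum = gsum * x + gsum.
Proof.
rewrite mulr_sumr; under eq_bigr do rewrite x_gexp //.
rewrite big_split /= -mulr_suml; congr (_ + _).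
by rewrite -sum_gexp_succ -sum_exp_mulrn_telescope -scaler_nat (pcharf0 p_char) scale0r addr0.
Qed.

Lemma xaddr1_xsum_alt : (x + 1) * xsum_alt = 0.
Proof.
rewrite -(prednK p_gt0) addr1_mul_sum_signr prednK //.
by rewrite (signr_pred_pchar p_prime p_char) scale1r xexp_p subrr.
Qed.

Lemma xsum_mulxB1 : xsum * (x - 1) = 0.
Proof. by rewrite mulr_suml -(prednK p_gt0) sum_exp_mulrB1 prednK // xexp_p subrr. Qed.

Lemma gM_Lambda_l : g * Lambda_l = Lambda_l.
Proof. by rewrite mulrA (gexpM_gsum 1). Qed.

Lemma xM_Lambda_l : x * Lambda_l = 0.
Proof. by rewrite mulrA x_gsum -{2}[gsum]mulr1 -mulrDr -mulrA xaddr1_xsum_alt mulr0. Qed.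

Lemma Lambda_rMg : Lambda_r * g = Lambda_r.
Proof. by rewrite -mulrA (gsumM_gexp 1). Qed.

Lemma Lambda_rMx : Lambda_r * x = 0.
Proof.
rewrite -mulrA.
have -> : gsum * x = (x - 1) * gsum by rewrite mulrBl mul1r x_gsum addrK.
by rewrite mulrA xsum_mulxB1 mul0r.
Qed.

Lemma coord_gsum_xexp a b m : (m <= p)%N -> (a < p)%N -> (b < p)%N ->
  coord a b (gsum * x ^+ m) = ((m == b) || (m == p) && (b == 1%N))%:R.
Proof.
move=> le_mp lt_ap lt_bp; rewrite mulr_suml linear_sum /=.
rewrite -(sum_ord_natr_eq (fun _ => ((m == b) || (m == p) && (b == 1%N))%:R) lt_ap).
apply: eq_bigr => i _; rewrite coord_gx_le // modn_small //.
by case: eqP; rewrite ?mulr1 ?mulr0.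
Qed.

Lemma coord_Lambda_l a b : (a < p)%N -> (b < p)%N ->
  coord a b Lambda_l = (-1) ^+ b - (b == 0%N)%:R.
Proof.
move=> lt_ap lt_bp; rewrite mulr_sumr linear_sum /=.
rewrite (eq_big_nat _ _ (F2 := fun i => (-1) ^+ i * (i == b)%:R)) => [|i /andP[_ lt_ip]].
  by rewrite sum_nat1 // (sum_ord_natr_eq (fun i => (-1) ^+ i)) // mul1r eq_sym.
by rewrite -scalerAr linearZ /= coord_gsum_xexp ?(ltnW lt_ip) // (ltn_eqF lt_ip) orbF.
Qed.

Lemma coord_g_fixed L i j : g * L = L -> (i < p)%N -> (j < p)%N ->
  coord i j L = coord 0 j L.
Proof.
move=> gL; elim: i => [//|i IHi] lt_ip lt_jp.
by rewrite -IHi ?(ltnW lt_ip) // -{1}gL coord_gM.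
Qed.

Lemma g_fixed_gsumM L : g * L = L -> L = gsum * \sum_(j < p) coord 0 j L *: x ^+ j.
Proof.
move=> gL; rewrite {1}(coordK L) mulr_suml; apply: eq_bigr => i _.
by rewrite mulr_sumr; apply: eq_bigr => j _; rewrite (coord_g_fixed gL) // scalerAr.
Qed.

(* For L = gsum * V, x * L = gsum * ((x + 1) * V), so x * L = 0 says (x + 1) * V = 0
   coefficientwise. *)
Lemma left_invariant_rec L b : g * L = L -> x * L = 0 -> (b < p)%N -> b != 1%N ->
  coord 0 b L + (if b is b'.+1 then coord 0 b' L else 0) = 0.
Proof.
move=> gL xL lt_bp b_neq1.
have := congr1 (coord 0 b) xL; rewrite linear0 {1}(g_fixed_gsumM gL) mulrA x_gsum.
rewrite mulr_sumr linear_sum /=.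
under eq_bigr => j _ do rewrite -scalerAr linearZ /= mulrDl -mulrA -exprS linearD /=
  !coord_gsum_xexp ?(ltnW (ltn_ord j)) ?(ltn_ord j) // (negbTE b_neq1) !andbF !orbF.
move=> rec; rewrite -[RHS]rec; under eq_bigr do rewrite mulrDr.
rewrite big_split /= (sum_ord_natr_eq (coord 0 ^~ L) lt_bp) addrC; congr (_ + _).
case: b lt_bp {b_neq1 rec} => [|b] lt_bp; first by rewrite big1 // => j _; rewrite mulr0.
rewrite (eq_bigr (fun j : 'I_p => coord 0 j L * (j == b :> nat)%:R)) => [|j _].
  by rewrite (sum_ord_natr_eq (coord 0 ^~ L)) // ltnW.
by rewrite eqSS.
Qed.

Lemma left_invariant_scale L : g * L = L -> x * L = 0 -> exists c, L = c *: Lambda_l.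
Proof.
move=> gL xL; set d := coord 0 ^~ L.
have d0 : d 0%N = 0 by have := left_invariant_rec gL xL p_gt0 isT; rewrite addr0.
have d_alt : forall b, (0 < b < p)%N -> d b = - d 1%N * (-1) ^+ b.
  apply: sign_alternating_rec => b b_gt0 lt_bp.
  have b1 : b.+1 != 1%N by rewrite eqSS -lt0n.
  by move/eqP: (left_invariant_rec gL xL lt_bp b1); rewrite addr_eq0 => /eqP.
exists (- d 1%N); apply: coord_inj => a b lt_ap lt_bp.
rewrite linearZ /= coord_Lambda_l // (coord_g_fixed gL) //.
case: b lt_bp => [|b] lt_bp; first by rewrite subrr mulr0; exact: d0.
by rewrite /= subr0; apply: d_alt.
Qed.

Lemma coord_Mx L a b : (a < p)%N -> (b < p)%N -> coord a b (L * x) =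
  \sum_(j < p) coord a j L * ((j.+1 == b) || (j.+1 == p) && (b == 1%N))%:R.
Proof.
move=> lt_ap lt_bp; rewrite {1}(coordK L) mulr_suml linear_sum /=.
rewrite -(sum_ord2_natr_eq (fun i j => coord i j L)
  (fun j => (j.+1 == b) || (j.+1 == p) && (b == 1%N)) lt_ap).
apply: eq_bigr => i _; rewrite mulr_suml linear_sum; apply: eq_bigr => j _ /=.
by rewrite -scalerAl linearZ /= -mulrA -exprSr coord_gx_le // modn_small.
Qed.

Lemma coord_Mx_succ L a b : (a < p)%N -> (0 < b)%N -> (b.+1 < p)%N ->
  coord a b.+1 (L * x) = coord a b L.
Proof.
move=> lt_ap b_gt0 lt_bp; rewrite coord_Mx //.
have b1 : (b.+1 == 1%N) = false by rewrite eqSS gtn_eqF.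
rewrite (eq_bigr (fun j : 'I_p => coord a j L * (j == b :> nat)%:R)) => [|j _].
  by rewrite (sum_ord_natr_eq (coord a ^~ L)) // ltnW.
by rewrite eqSS b1 andbF orbF.
Qed.

Lemma coord_Mx_1 L a : (a < p)%N -> coord a 1 (L * x) = coord a 0 L + coord a p.-1 L.
Proof.
move=> lt_ap; rewrite coord_Mx //.
have eq_pred j : (j.+1 == p) = (j == p.-1) by rewrite -{1}(prednK p_gt0) eqSS.
under eq_bigr => j _ do rewrite eqxx andbT eqSS eq_pred.
have or_natr (j : nat) : ((j == 0%N) || (j == p.-1))%:R = (j == 0%N)%:R + (j == p.-1)%:R :> k.
  by case: eqP => [->|_]; rewrite ?add0r // eq_sym predp_neq0 addr0.
under eq_bigr => j _ do rewrite or_natr mulrDr.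
by rewrite big_split /= !(sum_ord_natr_eq (coord a ^~ L)).
Qed.

Lemma coord_gexp_xexp_g i j a b : (a < p)%N -> (j <= b)%N -> (b < p)%N ->
  coord a b (g ^+ i * x ^+ j * g) = (((i.+1 %% p)%N == a) && (j == b))%:R.
Proof.
move=> lt_ap le_jb lt_bp; have lt_jp := leq_ltn_trans le_jb lt_bp.
have -> : g ^+ i * x ^+ j * g =
    g ^+ i.+1 * x ^+ j + g ^+ i * (x ^+ j * g ^+ 1 - g ^+ 1 * x ^+ j).
  by rewrite expr1 mulrBr !mulrA -exprSr addrC subrK.
rewrite linearD /= coord_gx // (@coord_xdeg_lt j) ?addr0 //.
exact/xdeg_lt_gexpM/xexp_gexp_xdeg_lt.
Qed.

Lemma coord_Mg_top L a : (a.+1 < p)%N -> coord a.+1 p.-1 (L * g) = coord a p.-1 L.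
Proof.
move=> lt_ap; rewrite {1}(coordK L) mulr_suml linear_sum /=.
rewrite -(sum_ord_natr_eq (coord a ^~ L) predp_lt).
rewrite -(sum_ord2_natr_eq (fun i j => coord i j L) (pred1 p.-1) (ltnW lt_ap)).
apply: eq_bigr => i _; rewrite mulr_suml linear_sum; apply: eq_bigr => j _ /=.
by rewrite -scalerAl linearZ /= coord_gexp_xexp_g ?leq_predp // modn_succ_eq.
Qed.

Lemma right_invariant_coord L a b : L * g = L -> L * x = 0 -> (a < p)%N -> (b < p)%N ->
  coord a b L = coord 0 p.-1 L * ((b == p.-1)%:R - (b == 0%N)%:R).
Proof.
move=> Lg Lx lt_ap lt_bp.
have top i : (i < p)%N -> coord i p.-1 L = coord 0 p.-1 L.
  by elim: i => [//|i IHi] lt_ip; rewrite -IHi ?(ltnW lt_ip) // -{1}Lg coord_Mg_top.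
case: b lt_bp => [|b] lt_bp.
  move/eqP: (coord_Mx_1 L lt_ap); rewrite Lx linear0 eq_sym addr_eq0 => /eqP ->.
  by rewrite top // eq_sym predp_neq0 sub0r mulrN1.
case: (ltnP b.+1 p.-1) => [lt_bp1|le_pb].
  have lt_b2p : (b.+2 < p)%N by rewrite -(prednK p_gt0) ltnS.
  by rewrite -coord_Mx_succ // Lx linear0 (ltn_eqF lt_bp1) subrr mulr0.
have bp : b.+1 = p.-1 by apply/eqP; rewrite eqn_leq le_pb leq_predp.
by rewrite bp top // eqxx predp_neq0 subr0 mulr1.
Qed.

Lemma coord_Lambda_r_top : coord 0 p.-1 Lambda_r = 1.
Proof.
rewrite mulr_suml linear_sum /=.
rewrite (eq_big_nat _ _ (F2 := fun j => 1 * (j == p.-1)%:R)) => [|j /andP[_ lt_jp]].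
  by rewrite sum_nat1 // (sum_ord_natr_eq (fun=> 1)) // mul1r eq_sym predp_neq0 subr0.
rewrite mul1r mulr_sumr linear_sum /= -(sum_ord_natr_eq (fun=> (j == p.-1)%:R) p_gt0).
apply: eq_bigr => i _.
rewrite -[x ^+ j * g ^+ i](subrK (g ^+ i * x ^+ j)) linearD /= coord_gx // modn_small //.
rewrite (coord_xdeg_lt (leq_predp lt_jp) p_gt0 predp_lt (xexp_gexp_xdeg_lt gxC j i)) add0r.
by rewrite mulrC -natrM mulnb.
Qed.

Lemma right_invariant_scale L : L * g = L -> L * x = 0 -> exists c, L = c *: Lambda_r.
Proof.
move=> Lg Lx; exists (coord 0 p.-1 L); apply: coord_inj => a b lt_ap lt_bp.
rewrite linearZ /= (right_invariant_coord Lg Lx) //.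
rewrite (right_invariant_coord Lambda_rMg Lambda_rMx) //.
by rewrite coord_Lambda_r_top mul1r.
Qed.

Section DualIntegrals.
Variables (lam : A -> k) (lam_lin : klinear lam).
HB.instance Definition _ := GRing.isLinear.Build k A k *%R lam lam_lin.

Lemma delta_dual_left_integral c :
  (forall i j : 'I_p,
     lam (g ^+ i * x ^+ j) = c * ((i == 1%N :> nat) && (j == p.-1 :> nat))%:R) ->
  dual_left_integral p g x lam.
Proof.
move=> lam_delta f _ m n.
have lamE a b : (a < p)%N -> (b < p)%N ->
    lam (g ^+ a * x ^+ b) = c * ((a == 1%N) && (b == p.-1))%:R.
  by move=> lt_ap lt_bp; apply: (lam_delta (Ordinal lt_ap) (Ordinal lt_bp)).
rewrite (conv_on_basis_count (t := n) (c := f 1 * lam (g ^+ m * x ^+ n))) ?binn ?mul1r // => w.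
have le_wn := count_le_size w.
case: eqP => [w_n|/eqP w_n].
  rewrite w_n Dleft_alltrue ?count_negb ?size_tuple ?w_n ?subnn // lamE //.
  case: (boolP ((m == 1%N :> nat) && (n == p.-1 :> nat))) => [/andP[/eqP m1 /eqP np]|_].
    by rewrite -exprD m1 np add1n prednK // gexp_p.
  by rewrite !mulr0.
rewrite lamE ?(leq_ltn_trans le_wn) //.
have -> : (count id w == p.-1) = false.
  apply: ltn_eqF; apply: (leq_trans _ (leq_predp (ltn_ord n))).
  by rewrite ltn_neqAle w_n le_wn.
by rewrite andbF !mulr0.
Qed.

(* Test against the coordinate of g^(m+t) x on g^m x^(t+1): only the t + 1 words with a
   single x contribute, each by lam (g^m x^t). *)
Lemma dual_left_integral_low : dual_left_integral p g x lam ->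
  forall t m, (t < p.-1)%N -> (m < p)%N -> lam (g ^+ m * x ^+ t) = 0.
Proof.
move=> lam_dli t; elim/ltn_ind: t => t IHt m lt_tp lt_mp.
have lt_t1p : (t.+1 < p)%N by rewrite -(prednK p_gt0) ltnS.
have lt_rp : ((m + t) %% p < p)%N by rewrite ltn_pmod.
have := lam_dli _ (coord_linear ((m + t) %% p) 1) (Ordinal lt_mp) (Ordinal lt_t1p).
rewrite /= coord1 // andbF mul0r.
rewrite (conv_on_basis_count (t := t) (c := lam (g ^+ m * x ^+ t))).
  by rewrite binSn => /eqP; rewrite mulf_eq0 (negbTE (natr_lt_p_neq0 _)) //= => /eqP.
move=> w; have le_wt := count_le_size w.
have w_negb : count negb w = (t.+1 - count id w)%N by rewrite count_negb size_tuple.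
case: (ltngtP (count id w) t) => [lt_wt|gt_wt|w_t].
- by rewrite (IHt _ lt_wt) ?mulr0 // (ltn_trans lt_wt lt_tp).
- have w_t1 : count id w = t.+1 by apply/eqP; rewrite eqn_leq gt_wt le_wt.
  rewrite coord_gexpM_Dleft ?w_negb ?w_t1 ?subnn //.
  by rewrite coord_gx // andbF mul0r.
- rewrite coord_gexpM_Dleft ?w_negb ?w_t ?subSnn //.
  by rewrite coord_gx // eqxx mul1r.
Qed.

Lemma dual_left_integral_top m : dual_left_integral p g x lam -> (m < p)%N -> m != 1%N ->
  lam (g ^+ m * x ^+ p.-1) = 0.
Proof.
move=> lam_dli lt_mp m_neq1.
have := lam_dli _ (coord_linear 0 0) (Ordinal lt_mp) (Ordinal predp_lt).
rewrite /= coord1 // mul1r.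
rewrite (conv_on_basis_count (t := p.-1)
  (c := (((m + p.-1) %% p)%N == 0%N)%:R * lam (g ^+ m * x ^+ p.-1))).
  rewrite binn mul1r modn_add_predp // (negbTE m_neq1) mul0r.
  by move=> lam0; rewrite lam0.
move=> w; have le_wp := count_le_size w.
case: (ltngtP (count id w) p.-1) => [lt_wp|gt_wp|w_p].
- by rewrite (dual_left_integral_low lam_dli) // mulr0.
- by move: (leq_trans gt_wp le_wp); rewrite ltnn.
- rewrite Dleft_alltrue ?count_negb ?size_tuple ?w_p ?subnn //.
  by rewrite -exprD coord_gexp // andbT.
Qed.

Lemma dual_left_integral_delta : dual_left_integral p g x lam ->
  exists c : k, forall i j : 'I_p,
    lam (g ^+ i * x ^+ j) = c * ((i == 1%N :> nat) && (j == p.-1 :> nat))%:R.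
Proof.
move=> lam_dli; exists (lam (g ^+ 1 * x ^+ p.-1)) => i j.
case: (ltnP j p.-1) => [lt_jp|le_pj].
  by rewrite (dual_left_integral_low lam_dli) // (ltn_eqF lt_jp) andbF mulr0.
have -> : nat_of_ord j = p.-1 by apply/eqP; rewrite eqn_leq le_pj leq_predp.
rewrite eqxx andbT; case: (eqVneq (nat_of_ord i) 1%N) => [->|i_neq1]; first by rewrite mulr1.
by rewrite (dual_left_integral_top lam_dli) // mulr0.
Qed.

Lemma delta_dual_right_integral c :
  (forall i j : 'I_p,
     lam (g ^+ i * x ^+ j) = c * ((i == 0%N :> nat) && (j == p.-1 :> nat))%:R) ->
  dual_right_integral p g x lam.
Proof.
move=> lam_delta f _ m n.
have lamE a b : (b < p)%N ->
    lam (g ^+ a * x ^+ b) = c * (((a %% p)%N == 0%N) && (b == p.-1))%:R.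
  by move=> lt_bp; rewrite -gexp_mod (lam_delta (Ordinal (ltn_pmod a p_gt0)) (Ordinal lt_bp)).
rewrite (conv_on_basis_count (t := 0) (c := lam (g ^+ m * x ^+ n) * f (g ^+ m))).
  rewrite bin0 mul1r; case: (eqVneq (nat_of_ord m) 0%N) => [->|m_neq0].
    by rewrite mul1r mulrC.
  by rewrite lamE // modn_small // (negbTE m_neq0) /= !mulr0 !mul0r.
move=> w; have w_negb : count negb w = (n - count id w)%N by rewrite count_negb size_tuple.
case: eqP => [w0|/eqP w_neq0]; first by rewrite w0 mulr1 Dleft_allfalse // size_tuple.
have lt_negb : (count negb w < p.-1)%N.
  have w_gt0 : (0 < count id w)%N by rewrite lt0n.
  rewrite w_negb; apply: leq_trans (leq_predp (ltn_ord n)).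
  by rewrite ltn_subrL w_gt0 (leq_trans w_gt0 (count_le_size w)).
rewrite (gexpM_Dleft_kernel gxC lam_lin (d := p.-1)) ?(ltnW lt_negb) //.
  by rewrite lamE ?(ltn_trans lt_negb) // (ltn_eqF lt_negb) andbF !mulr0 mul0r.
by move=> i j lt_jp; rewrite lamE ?(ltn_trans lt_jp) // (ltn_eqF lt_jp) andbF mulr0.
Qed.

Lemma dual_right_integral_off m n : dual_right_integral p g x lam ->
  (m < p)%N -> (n < p)%N -> m != 0%N -> lam (g ^+ m * x ^+ n) = 0.
Proof.
move=> lam_dri lt_mp lt_np m_neq0.
have := lam_dri _ (coord_linear m 0) (Ordinal lt_mp) (Ordinal lt_np).
rewrite /= coord1 // (negbTE m_neq0) mul0r.
rewrite (conv_on_basis_count (t := 0) (c := lam (g ^+ m * x ^+ n))) ?bin0 ?mul1r // => w.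
case: eqP => [w0|/eqP w_neq0].
  by rewrite w0 Dleft_allfalse // size_tuple coord_gx // modn_small // !eqxx mulr1.
by rewrite coord_gx ?(leq_ltn_trans (count_le_size w)) // (negbTE w_neq0) andbF mulr0.
Qed.

(* Test against the coordinate of g^(p-1) x on g^(p-1) x^(t+1): only the t + 1 words with a
   single g contribute, each by lam (x^t). *)
Lemma dual_right_integral_low t : dual_right_integral p g x lam ->
  (t < p.-1)%N -> lam (x ^+ t) = 0.
Proof.
move=> lam_dri; elim/ltn_ind: t => t IHt lt_tp.
have lt_t1p : (t.+1 < p)%N by rewrite -(prednK p_gt0) ltnS.
have := lam_dri _ (coord_linear p.-1 1) (Ordinal predp_lt) (Ordinal lt_t1p).
rewrite /= coord1 // andbF mul0r (conv_on_basis_count (t := 1) (c := lam (x ^+ t))).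
  by rewrite bin1 => /eqP; rewrite mulf_eq0 (negbTE (natr_lt_p_neq0 _)) //= => /eqP.
move=> w; have le_wt := count_le_size w.
case: eqP => [w1|/eqP w_neq1]; last first.
  by rewrite coord_gx ?(leq_ltn_trans le_wt) // (negbTE w_neq1) andbF mulr0.
have w_negb : count negb w = t by rewrite count_negb size_tuple w1 subn1.
rewrite w1 coord_gx // modn_small // !eqxx mulr1.
rewrite (gexpM_Dleft_kernel gxC lam_lin (d := t)) ?w_negb ?w1 ?addn1 ?prednK ?gexp_p ?mul1r //.
move=> i j lt_jt; rewrite -gexp_mod.
case: (eqVneq (i %% p)%N 0%N) => [->|i_neq0]; first by rewrite mul1r IHt // (ltn_trans lt_jt).
by apply: dual_right_integral_off => //; [exact: ltn_pmod | exact: ltn_trans lt_jt (ltnW lt_t1p)].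
Qed.

Lemma dual_right_integral_delta : dual_right_integral p g x lam ->
  exists c : k, forall i j : 'I_p,
    lam (g ^+ i * x ^+ j) = c * ((i == 0%N :> nat) && (j == p.-1 :> nat))%:R.
Proof.
move=> lam_dri; exists (lam (x ^+ p.-1)) => i j.
case: (eqVneq (nat_of_ord i) 0%N) => [->|i_neq0]; last first.
  by rewrite (dual_right_integral_off lam_dri) // mulr0.
rewrite mul1r; case: (ltnP j p.-1) => [lt_jp|le_pj].
  by rewrite (dual_right_integral_low lam_dri) // (ltn_eqF lt_jp) mulr0.
have -> : nat_of_ord j = p.-1 by apply/eqP; rewrite eqn_leq le_pj leq_predp.
by rewrite eqxx mulr1.
Qed.

End DualIntegrals.

Section Counit.
Variables (eps : A -> k) (eps_counit : is_counit g x eps).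
Let eps_lin : klinear eps. Proof. by case: eps_counit. Qed.
HB.instance Definition _ := GRing.isLinear.Build k A k *%R eps eps_lin.

Lemma counit_gexp_xexp i j : eps (g ^+ i * x ^+ j) = (j == 0%N)%:R.
Proof.
case: eps_counit => _ epsM eps1 epsg epsx.
have epsX a n : eps (a ^+ n) = eps a ^+ n.
  by elim: n => [|n IHn]; rewrite ?eps1 // !exprS epsM IHn.
by rewrite epsM !epsX epsg epsx expr1n mul1r expr0n.
Qed.

Lemma left_integralP L : left_integral eps L <-> g * L = L /\ x * L = 0.
Proof.
split=> [intL|[gL xL] h].
  by rewrite !intL; case: eps_counit => _ _ _ -> ->; rewrite scale1r scale0r.
have gexpL i : g ^+ i * L = L.
  by elim: i => [|i IHi]; rewrite ?mul1r // exprSr -mulrA gL.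
have xexpL j : x ^+ j * L = (j == 0%N)%:R *: L.
  by case: j => [|j]; rewrite ?mul1r ?scale1r // exprSr -mulrA xL mulr0 scale0r.
rewrite [in LHS](coordK h) [in RHS](coordK h) mulr_suml linear_sum scaler_suml.
apply: eq_bigr => i _; rewrite mulr_suml linear_sum scaler_suml; apply: eq_bigr => j _ /=.
rewrite -scalerAl -mulrA xexpL -scalerAr gexpL [eps _]linearZ /= counit_gexp_xexp.
by rewrite !scalerA mulrC.
Qed.

Lemma right_integralP L : right_integral eps L <-> L * g = L /\ L * x = 0.
Proof.
split=> [intL|[Lg Lx] h].
  by rewrite !intL; case: eps_counit => _ _ _ -> ->; rewrite scale1r scale0r.
have Lgexp i : L * g ^+ i = L.
  by elim: i => [|i IHi]; rewrite ?mulr1 // exprS mulrA Lg.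
have Lxexp j : L * x ^+ j = (j == 0%N)%:R *: L.
  by case: j => [|j]; rewrite ?mulr1 ?scale1r // exprS mulrA Lx mul0r scale0r.
rewrite [in LHS](coordK h) [in RHS](coordK h) mulr_sumr linear_sum scaler_suml.
apply: eq_bigr => i _; rewrite mulr_sumr linear_sum scaler_suml; apply: eq_bigr => j _ /=.
by rewrite -scalerAr mulrA Lgexp Lxexp [eps _]linearZ /= counit_gexp_xexp !scalerA mulrC.
Qed.

End Counit.
End Radford.

Theorem lemma3p2 (k : closedFieldType) (p : nat) (A : algType k)
    (g x : A) (eps : A -> k) :
  prime p -> p \in [pchar k] ->
  radford_rels p g x -> radford_basis p g x -> is_counit g x eps ->
  [/\ forall L : A, left_integral eps L <->
        exists c : k, L = c *: ((\sum_(i < p) g ^+ i) *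
                                (\sum_(1 <= i < p) (-1) ^+ i *: x ^+ i)),
      forall L : A, right_integral eps L <->
        exists c : k, L = c *: ((\sum_(1 <= i < p) x ^+ i) *
                                (\sum_(i < p) g ^+ i)),
      forall lam : A -> k, klinear lam ->
        (dual_left_integral p g x lam <->
         exists c : k, forall i j : 'I_p,
           lam (g ^+ i * x ^+ j) = c * ((i == 1%N :> nat) && (j == p.-1 :> nat))%:R)
    & forall lam : A -> k, klinear lam ->
        (dual_right_integral p g x lam <->
         exists c : k, forall i j : 'I_p,
           lam (g ^+ i * x ^+ j) = c * ((i == 0%N :> nat) && (j == p.-1 :> nat))%:R)].
Proof.
move=> p_prime p_char rels basis eps_counit.
split=> [L|L|lam lam_lin|lam lam_lin].
- rewrite (left_integralP p_prime basis eps_counit).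
  split=> [[gL xL]|[c ->]]; first by apply: left_invariant_scale.
  by rewrite -!scalerAr gM_Lambda_l // xM_Lambda_l // scaler0.
- rewrite (right_integralP p_prime basis eps_counit).
  split=> [[Lg Lx]|[c ->]]; first by apply: right_invariant_scale.
  by rewrite -!scalerAl Lambda_rMg // Lambda_rMx // scaler0.
- split; first by apply: dual_left_integral_delta.
  by case=> c; apply: delta_dual_left_integral.
- split; first by apply: dual_right_integral_delta.
  by case=> c; apply: delta_dual_right_integral.
Qed.
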